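(* Every Tychonoff space $X$ of countable pseudocharacter is a nowhere almost $P$-space.
   Context: $C(X)$ is the ring of real-valued continuous functions on $X$; a cozero set is a set $\{x: h(x)\neq 0\}$ with $h\in C(X)$. $T''(X)$ is the set of all functions $f\colon X\to\mathbb{R}$ for which there is a dense cozero set $U$ of $X$ with $f|_U$ continuous. $\chi_A$ is the characteristic function of $A$. $X$ is a nowhere almost $P$-space if $\chi_{\{p\}}\in T''(X)$ for all $p\in X$. $X$ has countable pseudocharacter if every singleton is a $G_\delta$-set. *)

From HB Require Import structures.
From mathcomp Require Import all_boot all_order all_algebra.
From mathcomp Require Import all_classical all_reals all_analysis.
Set Implicit Arguments. Unset Strict Implicit. Unset Printing Implicit Defensive.
Import Order.TTheory GRing.Theory Num.Theory numFieldNormedType.Exports.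
Local Open Scope classical_set_scope.
Local Open Scope ring_scope.

Definition cozero {X : topologicalType} {R : realType} (h : X -> R) : set X :=
  [set x | h x != 0].

Definition is_cozero_set {X : topologicalType} (R : realType) (U : set X) : Prop :=
  exists h : X -> R, continuous h /\ U = cozero h.

Definition Tpp (X : topologicalType) (R : realType) : set (X -> R) :=
  [set f | exists U : set X,
     is_cozero_set R U /\ dense U /\ {within U, continuous f}].

Definition nowhere_almost_P (X : topologicalType) (R : realType) : Prop :=
  forall p : X, @Tpp X R (\1_[set p] : X -> R).

Definition countable_pseudocharacter (X : topologicalType) : Prop :=
  forall p : X, exists F : nat -> set X,
    (forall n, open (F n)) /\ [set p] = \bigcap_n F n.

Definition completely_regular (X : topologicalType) (R : realType) : Prop :=
  forall (x : X) (B : set X), closed B -> ~ B x ->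
    exists f : X -> R, continuous f /\ f x = 0 /\ (forall y, B y -> f y = 1).

Definition tychonoff_space (X : topologicalType) (R : realType) : Prop :=
  hausdorff_space X /\ completely_regular X R.

From HB Require Import structures.
From mathcomp Require Import all_boot all_order all_algebra.
From mathcomp Require Import all_classical all_reals all_analysis.
Set Implicit Arguments. Unset Strict Implicit. Unset Printing Implicit Defensive.
Import Order.TTheory GRing.Theory Num.Theory numFieldNormedType.Exports.
Local Open Scope classical_set_scope.
Local Open Scope ring_scope.

(* If {p} is open it is clopen, points being closed, so \1_[set p] is
   continuous on the cozero set X.  Otherwise X \ {p} is dense and
   \1_[set p] vanishes on it, so it suffices that X \ {p} is a cozero set.
   Writing {p} as the intersection of open sets F_n, complete regularity
   gives continuous f_n vanishing at p and equal to 1 off F_n; then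
   X \ {p} is the union of the cozero sets of the f_n, and a countable
   union of cozero sets is the cozero set of sum_n 2^-n min(|f_n|, 1),
   which is continuous by the Weierstrass M-test. *)

Lemma ler_norm_sub_series (R : numDomainType) (V : normedZmodType R)
    (u_ : V ^nat) (v_ : R ^nat) : (forall k, `|u_ k| <= v_ k) ->
  forall m n, `|series u_ n - series u_ m| <= `|series v_ n - series v_ m|.
Proof.
move=> uv m n; rewrite !sub_series; case: leqP => _; rewrite ?normrN;
  apply: le_trans (ler_norm_sum _ _ _) (le_trans (ler_sum _ (fun k _ => uv k)) _);
  by rewrite ger0_norm // sumr_ge0 // => k _; exact: le_trans (normr_ge0 _) (uv k).
Qed.

Lemma continuous_series_Mtest (X : topologicalType) (R : realType)
    (g_ : nat -> X -> R) (M : R ^nat) :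
  (forall n, continuous (g_ n)) -> (forall n x, `|g_ n x| <= M n) ->
  cvgn (series M) -> continuous (fun x => limn (series (g_ ^~ x))).
Proof.
move=> g_cts g_M M_cvg.
pose S : nat -> arrow_uniform_type X R^o := @series {uniform X -> _} g_.
have S_at n t : S n t = series (g_ ^~ t) n by rewrite /S /series /= fct_sumE.
have S_cts n : continuous (S n).
  elim: n => [|n IH]; first by rewrite /S /series /= big_geq// => ?; exact: cvg_cst.
  rewrite /S /series /= big_nat_recr //= => t.
  by apply: continuousD; [exact: IH | exact: g_cts].
have S_cauchy : cauchy (S @ \oo).
  apply/cauchy_ballP => e e_gt0.
  have /cauchy_cvgP/cauchy_ballP/(_ e e_gt0) := M_cvg.
  rewrite !near_simpl; apply: filterS => -[n m] /= Mnm t.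
  rewrite /ball /= !S_at in Mnm *.
  exact: le_lt_trans (ler_norm_sub_series (g_M ^~ t) m n) Mnm.
have /cauchy_cvgP/cvg_ex[f S_f] := S_cauchy.
have S_f_unif : {uniform, S @ \oo --> f}.
  by move=> ?; rewrite /= uniform_nbhsT; exact: S_f.
suff -> : (fun x => limn (series (g_ ^~ x))) = f.
  apply: (@uniform_limit_continuous _ _ (S @ \oo) f _ _ S_f_unif).
  by near_simpl; apply: nearW.
apply/funext => t; apply/(cvg_lim (@Rhausdorff R)).
have /pointwise_cvgP/(_ t) := [elaborate pointwise_uniform_cvg _ S_f_unif].
by rewrite -fmap_comp /comp; under eq_fun do rewrite S_at.
Qed.

Lemma lim_series_eq0 (R : realType) (u_ : R ^nat) :
  (forall n, 0 <= u_ n) -> cvgn (series u_) ->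
  limn (series u_) = 0 <-> forall n, u_ n = 0.
Proof.
move=> u_ge0 u_cvg; split => [lim0 n|u0]; last first.
  rewrite (_ : series u_ = cst 0) ?lim_cst //.
  by apply/funext => n; rewrite /series /= big1.
apply/eqP; rewrite eq_le u_ge0 andbT -lim0.
have u_nd : nondecreasing_seq (series u_).
  by apply: nondecreasing_series => k _ _; exact: u_ge0.
apply: le_trans (nondecreasing_cvgn_le u_nd u_cvg n.+1).
by rewrite /series /= big_nat_recr //= lerDr sumr_ge0.
Qed.

Lemma is_cozero_set_bigcup_cozero (X : topologicalType) (R : realType)
    (k_ : nat -> X -> R) :
  (forall n, continuous (k_ n)) -> (forall n x, 0 <= k_ n x <= 1) ->
  is_cozero_set R (\bigcup_n cozero (k_ n)).
Proof.
move=> k_cts k_01.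
pose g_ n x := k_ n x * geometric 1 (2^-1) n.
have half_lt1 : `|2^-1| < 1 :> R.
  by rewrite gtr0_norm ?invr_gt0// invf_lt1// ltr1n.
have geo_gt0 n : 0 < geometric 1 (2^-1 : R) n.
  by rewrite /geometric /= mul1r exprn_gt0 ?invr_gt0.
have geo_ge0 n : 0 <= geometric 1 (2^-1 : R) n := ltW (geo_gt0 n).
have g_ge0 n x : 0 <= g_ n x.
  by rewrite mulr_ge0 //; case/andP: (k_01 n x).
have g_le n x : `|g_ n x| <= geometric 1 (2^-1) n.
  by rewrite ger0_norm // ler_piMl //; case/andP: (k_01 n x).
have g_cvg x : cvgn (series (g_ ^~ x)).
  apply: (series_le_cvg (g_ge0 ^~ x) geo_ge0 _ (is_cvg_geometric_series half_lt1)).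
  by move=> n; rewrite -[g_ n x]ger0_norm.
exists (fun x => limn (series (g_ ^~ x))); split.
  apply: (continuous_series_Mtest _ g_le (is_cvg_geometric_series half_lt1)).
  by move=> n x; apply: cvgM; [exact: k_cts|exact: cvg_cst].
apply/seteqP; split => x /=.
  case=> n _ /eqP k_neq0; apply/eqP => /(lim_series_eq0 (g_ge0 ^~ x) (g_cvg x)).
  by move/(_ n)/eqP; rewrite mulf_eq0 (gt_eqF (geo_gt0 n)) orbF => /eqP.
move=> /eqP lim_neq0; apply: contrapT => k_eq0; apply: lim_neq0.
apply/(lim_series_eq0 (g_ge0 ^~ x) (g_cvg x)) => n.
suff k0 : k_ n x = 0 by rewrite /g_ k0 mul0r.
by apply: contrapT => /eqP k_neq0; apply: k_eq0; exists n.
Qed.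

Lemma is_cozero_set_bigcup (X : topologicalType) (R : realType)
    (U_ : nat -> set X) :
  (forall n, is_cozero_set R (U_ n)) -> is_cozero_set R (\bigcup_n U_ n).
Proof.
move=> /choice[h_ h_P].
pose k_ n x := Order.min `|h_ n x| (1 : R).
have k_cts n : continuous (k_ n).
  move=> x; apply: (@continuous_min _ _ (fun y => `|h_ n y|) (fun=> 1)).
    by apply: cvg_norm; exact: (h_P n).1.
  exact: cvg_cst.
have k_01 n x : 0 <= k_ n x <= 1.
  by rewrite ge_min lexx orbT andbT le_min normr_ge0 ler01.
suff -> : \bigcup_n U_ n = \bigcup_n cozero (k_ n).
  exact: is_cozero_set_bigcup_cozero.
apply: eq_bigcupr => n _; rewrite (h_P n).2 /cozero; apply/funext => x /=.
rewrite /k_ /Order.min; case: ltP => [_|h_ge1]; first by rewrite normr_eq0.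
by rewrite oner_eq0 -normr_eq0 gt_eqF // (lt_le_trans ltr01 h_ge1).
Qed.

Lemma is_cozero_setT (X : topologicalType) (R : realType) :
  is_cozero_set R (@setT X).
Proof.
exists (fun=> 1); split; first exact: cst_continuous.
by apply/seteqP; split => x // _; rewrite /cozero /= oner_neq0.
Qed.

Lemma is_cozero_setC1 (X : topologicalType) (R : realType) (p : X)
    (F_ : nat -> set X) :
  completely_regular X R -> (forall n, open (F_ n)) ->
  [set p] = \bigcap_n F_ n -> is_cozero_set R (~` [set p]).
Proof.
move=> cr F_open p_E.
have F_p n : F_ n p by have : [set p] p by []; rewrite p_E => /(_ n I).
have /choice[f_ f_P] n : exists f : X -> R,
    continuous f /\ f p = 0 /\ (forall y, (~` F_ n) y -> f y = 1).
  by apply: cr; [exact: open_closedC | move=> /(_ (F_p n))].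
suff -> : ~` [set p] = \bigcup_n cozero (f_ n).
  by apply: is_cozero_set_bigcup => n; exists (f_ n); split; first exact: (f_P n).1.
apply/seteqP; split => x.
  rewrite p_E => /existsNP[n /not_implyP[_ F_nx]].
  by exists n => //; rewrite /cozero /= (f_P n).2.2 // oner_neq0.
by case=> n _ /eqP f_nx xp; apply: f_nx; rewrite xp (f_P n).2.1.
Qed.

Lemma dense_setC1 (X : topologicalType) (p : X) :
  ~ open [set p] -> dense (~` [set p]).
Proof.
move=> p_nopen O [x Ox] O_open; apply: contrapT => O_sub.
apply: p_nopen; suff <- : O = [set p] by [].
have O_p y : O y -> y = p by move=> Oy; apply: contrapT => yp; apply: O_sub; exists y.
by apply/seteqP; split => y; [exact: O_p | move=> ->; rewrite -(O_p x Ox)].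
Qed.

Lemma continuous_indic_clopen (X : topologicalType) (R : realType) (A : set X) :
  open A -> closed A -> continuous (\1_A : X -> R).
Proof.
move=> A_open A_closed x; apply: cvg_near_cst.
have [Ax|nAx] := pselect (A x).
  by apply: filterS (open_nbhs_nbhs (conj A_open Ax)) => y Ay; rewrite !indicE !mem_set.
have : open_nbhs x (~` A) by split => //; exact: closed_openC.
by move/open_nbhs_nbhs; apply: filterS => y nAy; rewrite !indicE !memNset.
Qed.

Lemma continuous_within_setC_indic (X : topologicalType) (R : realType) (A : set X) :
  {within ~` A, continuous (\1_A : X -> R)}.
Proof.
apply: (@subspace_eq_continuous _ _ _ (fun=> 0)); last exact: cst_continuous.
by move=> x /set_mem nAx /=; rewrite /from_subspace indicE memNset.
Qed.

Theorem proposition4p1 (R : realType) (X : topologicalType) :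
  tychonoff_space X R -> countable_pseudocharacter X -> nowhere_almost_P X R.
Proof.
move=> [X_hausdorff X_cr] X_pseudo p.
have [p_open|p_nopen] := pselect (open [set p]).
  exists setT; split; first exact: is_cozero_setT.
  split; first by move=> O [x Ox] _; exists x.
  apply/continuous_subspaceT/continuous_indic_clopen => //.
  exact/accessible_closed_set1/hausdorff_accessible.
have [F_ [F_open p_E]] := X_pseudo p.
exists (~` [set p]); split; first exact: is_cozero_setC1 X_cr F_open p_E.
by split; [exact: dense_setC1 | exact: continuous_within_setC_indic].
Qed.
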